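(* Let $G$ be a graph with at least one isolated vertex such that $G\ne\widetilde G$, and let $T$ be a minimum twin cover of $G$. Then for every $t\ge1$, \[(t+1)|T|+t-1\le \det(\mu_t(G))\le \det(\widetilde G)+(t+1)|T|+t-1.\] Moreover, both bounds are sharp: each is attained (with equality) by some graph $G$ satisfying the hypotheses.
   Context: All graphs are finite and simple. For a graph $G$ with $V(G)=\{v_1,\dots,v_n\}$ and an integer $t\ge1$, the generalized Mycielskian $\mu_t(G)$ has vertex set $\{u_i^s: 1\le i\le n,\ 0\le s\le t\}\cup\{w\}$, where $u_i^0$ is identified with $v_i$. Its edges are: $u_i^0u_j^0$ for each edge $v_iv_j$ of $G$; $u_i^su_j^{s+1}$ and $u_j^su_i^{s+1}$ for each edge $v_iv_j$ of $G$ and each $0\le s<t$; and $u_i^tw$ for all $1\le i\le n$. A set $S\subseteq V(G)$ is a determining set for $G$ if the only automorphism of $G$ fixing every vertex of $S$ is the identity; $\det(G)$ is the minimum size of a determining set. Two vertices are twins if they have the same open neighborhood; being twins is an equivalence relation on $V(G)$, and the twin quotient $\widetilde G$ has the equivalence classes as vertices, with two classes adjacent iff some members are adjacent in $G$ ($G\ne\widetilde G$ means $G$ has a pair of distinct twins). A minimum twin cover is a minimum-size vertex subset containing at least one vertex from every pair of distinct twins. *)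

From mathcomp Require Import all_boot.
From mathcomp Require Import fingroup perm.
Set Implicit Arguments. Unset Strict Implicit. Unset Printing Implicit Defensive.

Definition simple_graph (V : finType) (e : rel V) : Prop :=
  symmetric e /\ irreflexive e.

Definition is_aut (V : finType) (e : rel V) (p : {perm V}) : bool :=
  [forall x, forall y, e (p x) (p y) == e x y].

Definition determining (V : finType) (e : rel V) (S : {set V}) : bool :=
  [forall p : {perm V}, is_aut e p ==> [forall x in S, p x == x] ==> (p == 1%g)].

(* det(G): minimum size of a determining set (setT is always determining,
   so the default #|V| does not affect the value). *)
Definition det (V : finType) (e : rel V) : nat :=
  \big[minn/#|V|]_(S : {set V} | determining e S) #|S|.

(* Generalized Mycielskian mu_t(G): vertices u_i^s = Some (v_i, s), s <= t,
   and w = None. *)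
Definition mycielskian (V : finType) (e : rel V) (t : nat)
  : rel (option (V * 'I_t.+1)) :=
  fun x y =>
    match x, y with
    | Some (i, s), Some (j, r) =>
        e i j && [|| ((s : nat) == 0) && ((r : nat) == 0),
                     (r : nat) == s.+1 | (s : nat) == r.+1]
    | Some (_, s), None => (s : nat) == t
    | None, Some (_, r) => (r : nat) == t
    | None, None => false
    end.

Arguments mycielskian {V} e t _ _.

Definition twin (V : finType) (e : rel V) (x y : V) : bool :=
  [forall z, e x z == e y z].

Definition has_distinct_twins (V : finType) (e : rel V) : bool :=
  [exists x, exists y, (x != y) && twin e x y].

Definition twin_classes (V : finType) (e : rel V) : {set {set V}} :=
  [set [set y | twin e x y] | x : V].

Definition twin_vertex (V : finType) (e : rel V) : finType :=
  {A : {set V} | A \in twin_classes e}.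

Definition twin_quotient (V : finType) (e : rel V) : rel (twin_vertex e) :=
  fun A B => [exists x in val A, exists y in val B, e x y].

Arguments twin_quotient {V} e _ _.

Definition twin_cover (V : finType) (e : rel V) (T : {set V}) : bool :=
  [forall x, forall y, ((x != y) && twin e x y) ==> (x \in T) || (y \in T)].

Definition min_twin_cover (V : finType) (e : rel V) (T : {set V}) : Prop :=
  twin_cover e T /\ forall S : {set V}, twin_cover e S -> #|T| <= #|S|.

Definition has_isolated (V : finType) (e : rel V) : Prop :=
  exists v : V, forall u : V, ~~ e v u.

Definition thm_hyps (V : finType) (e : rel V) (T : {set V}) : Prop :=
  [/\ simple_graph e, has_isolated e, has_distinct_twins e & min_twin_cover e T].

From mathcomp Require Import all_boot.
From mathcomp Require Import fingroup perm.
From mathcomp Require Import zify.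
Set Implicit Arguments. Unset Strict Implicit. Unset Printing Implicit Defensive.

(* Write I for the set of isolated vertices of G and T for a minimum twin cover.
   Every determining set of a graph is a twin cover, since a transposition of two
   twins is an automorphism.
   - Lower bound.  Let S determine mu_t(G).  Each level S_s = {v | u_v^s in S} is
     a twin cover of G, so |S_t| >= |T|; for s < t the set (S_s u I) minus one
     isolated vertex is still a twin cover, whence |S_s| + |I \ S_s| >= |T| + 1.
     All copies of isolated vertices on levels s < t are pairwise twins in
     mu_t(G), so S misses at most one of them: sum_(s<t) |I \ S_s| <= 1.
     Summing gives |S| >= (t+1)|T| + t - 1.
   - Upper bound.  Pick an isolated i0 outside T (one exists by minimality of T)
     and a minimum determining set D of the twin quotient.  The set consisting of
     all copies of T, of i0 on levels 0..t-2, and of representatives of D on level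
     0 is determining: an automorphism fixing it fixes w, preserves levels, acts on
     level 0 by an automorphism of G inducing the identity on the twin quotient,
     hence is the identity on level 0, and then on every level by induction.
   - Sharpness.  The edgeless graph on two vertices attains both bounds, its twin
     quotient being a single vertex. *)

Section Automorphisms.
Variables (V : finType) (r : rel V).

Lemma autP (p : {perm V}) : is_aut r p -> forall x y, r (p x) (p y) = r x y.
Proof. by move=> /forallP H x y; apply/eqP/(forallP (H x) y). Qed.

Lemma aut_inv (p : {perm V}) : is_aut r p -> is_aut r p^-1.
Proof.
move=> H; apply/forallP=> x; apply/forallP=> y; apply/eqP.
by rewrite -(autP H) !permKV.
Qed.

Lemma perm_onto_fixed (p : {perm V}) y z : p y = y -> p z = y -> z = y.
Proof. by move=> py pz; apply: (@perm_inj _ p); rewrite py pz. Qed.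

End Automorphisms.

Section DeterminingNumber.
Variables (V : finType) (r : rel V).

Lemma bigmin_le (I : eqType) (s : seq I) (P : pred I) (F : I -> nat) d j :
  j \in s -> P j -> \big[minn/d]_(i <- s | P i) F i <= F j.
Proof.
elim: s => // a s IH; rewrite in_cons big_cons => /orP [/eqP <-|js] Pj.
  by rewrite Pj geq_minl.
case: ifP => _; last exact: IH.
by rewrite geq_min IH ?orbT.
Qed.

Lemma det_le S : determining r S -> det r <= #|S|.
Proof. by move=> HS; apply: bigmin_le; rewrite ?mem_index_enum. Qed.

Lemma setT_determining : determining r setT.
Proof.
apply/forallP=> p; apply/implyP=> _; apply/implyP=> /forallP H.
by apply/eqP/permP=> x; rewrite perm1; apply/eqP/(implyP (H x) (in_setT x)).
Qed.

Lemma det_attained : exists2 S, determining r S & #|S| = det r.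
Proof.
rewrite /det; apply: (big_rec (fun m => exists2 S, determining r S & #|S| = m)).
  by exists setT; [exact: setT_determining | exact: cardsT].
move=> S m HS [S' H1 H2]; case: (leqP #|S| m) => h.
  by exists S => //; apply/esym/minn_idPl.
by exists S' => //; rewrite H2; apply/esym/minn_idPr/ltnW.
Qed.

Lemma det_ge b : (forall S, determining r S -> b <= #|S|) -> b <= det r.
Proof. by move=> H; have [S HS <-] := det_attained; exact: H. Qed.

End DeterminingNumber.

Section Twins.
Variables (V : finType) (r : rel V).

Lemma twinP x y : reflect (forall z, r x z = r y z) (twin r x y).
Proof. by apply: (iffP forallP) => H z; apply/eqP. Qed.

Lemma twin_refl x : twin r x x.
Proof. by apply/twinP. Qed.

Lemma twin_sym x y : twin r x y -> twin r y x.
Proof. by move=> /twinP H; apply/twinP=> z. Qed.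

Lemma twin_trans x y z : twin r x y -> twin r y z -> twin r x z.
Proof. by move=> /twinP H1 /twinP H2; apply/twinP=> u; rewrite H1 H2. Qed.

Lemma aut_twin (p : {perm V}) x y : is_aut r p -> twin r (p x) (p y) = twin r x y.
Proof.
move=> hp; apply/twinP/twinP => h z.
  by rewrite -(autP hp) h (autP hp).
by rewrite -(permKV p z) !(autP hp) h.
Qed.

Lemma twin_coverP (C : {set V}) :
  reflect (forall x y, x != y -> twin r x y -> (x \in C) || (y \in C))
          (twin_cover r C).
Proof.
apply: (iffP forallP) => [H x y nxy txy | H x].
  by have /implyP := forallP (H x) y; apply; rewrite nxy.
by apply/forallP=> y; apply/implyP=> /andP [nxy txy]; exact: H.
Qed.

Hypothesis rsym : symmetric r.

Lemma tperm_twin_aut x y : twin r x y -> is_aut r (tperm x y).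
Proof.
move=> /twinP H.
have H' z : r z x = r z y by rewrite rsym H rsym.
apply/forallP=> a; apply/forallP=> b; apply/eqP.
by case: (tpermP x y a) => [->|->|_ _]; case: (tpermP x y b) => [->|->|_ _];
  rewrite ?H ?H'.
Qed.

Lemma determining_twin_cover S : determining r S -> twin_cover r S.
Proof.
move=> /forallP HS; apply/twin_coverP => x y nxy tw.
apply/negPn/negP => /norP [hx hy].
have := HS (tperm x y); rewrite tperm_twin_aut //= => /implyP H.
have : [forall z in S, tperm x y z == z].
  apply/forallP=> z; apply/implyP=> zS; rewrite tpermD //.
    by apply: contraNneq hx => ->.
  by apply: contraNneq hy => ->.
move/H/eqP/permP/(_ x); rewrite tpermL perm1 => exy.
by rewrite exy eqxx in nxy.
Qed.

End Twins.

Section IsolatedVertices.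
Variables (V : finType) (r : rel V).

Definition isolated : {set V} := [set x | [forall u, ~~ r x u]].

Lemma isolatedP x : x \in isolated -> forall u, r x u = false.
Proof. by rewrite inE => /forallP H u; apply/negbTE. Qed.

Lemma isolated_twin x y : x \in isolated -> y \in isolated -> twin r x y.
Proof. by move=> hx hy; apply/twinP => z; rewrite !isolatedP. Qed.

Lemma twin_isolated x y : twin r x y -> x \in isolated -> y \in isolated.
Proof.
by move=> /twinP H; rewrite !inE => /forallP h; apply/forallP => u; rewrite -H.
Qed.

(* Adding all isolated vertices but one to a twin cover keeps a twin cover:
   isolated vertices are twins only of each other. *)
Lemma cover_add_isolated (C : {set V}) i0 : i0 \in isolated ->
  twin_cover r C -> twin_cover r ((C :|: isolated) :\ i0).
Proof.
move=> i0i /twin_coverP cov; apply/twin_coverP => x y nxy tw.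
rewrite !(in_setD1, in_setU).
case xi: (x \in isolated).
  rewrite (twin_isolated tw xi) !orbT !andbT.
  by case: (eqVneq x i0) => [<-|//]; rewrite eq_sym nxy.
have yi : y \in isolated = false.
  by apply/negbTE; apply: contraFN xi => /(twin_isolated (twin_sym tw)).
rewrite yi !orbF; case/orP: (cov x y nxy tw) => [xC|yC].
  by rewrite xC andbT; case: (eqVneq x i0) xi => [->|//]; rewrite i0i.
by rewrite yC andbT orbC; case: (eqVneq y i0) yi => [->|//]; rewrite i0i.
Qed.

Lemma not_isolatedP x : x \notin isolated -> exists u, r x u.
Proof. by rewrite inE => /forallPn [u]; rewrite negbK; exists u. Qed.

(* If G has an isolated vertex, a minimum twin cover omits some isolated vertex:
   otherwise removing one isolated vertex from it would leave a twin cover. *)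
Lemma min_cover_omits_isolated (T : {set V}) v :
  min_twin_cover r T -> v \in isolated -> exists2 i0, i0 \in isolated & i0 \notin T.
Proof.
move=> [Tcov Tmin] vi.
have [isoT | /subsetPn [i0 i0i i0T]] := boolP (isolated \subset T); last by exists i0.
have := Tmin _ (cover_add_isolated vi Tcov).
by rewrite (setUidPl isoT) (cardsD1 v T) (subsetP isoT v vi) add1n ltnn.
Qed.

End IsolatedVertices.

Section TwinQuotient.
Variables (V : finType) (e : rel V) (d : V).
Hypothesis e_sym : symmetric e.

(* A chosen member of a set of vertices (d is the default for the empty set). *)
Definition rep (A : {set V}) : V := odflt d [pick x in A].

Lemma mem_rep (A : {set V}) x : x \in A -> rep A \in A.
Proof. by rewrite /rep; case: pickP => [y|/(_ x) /= ->]. Qed.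

Definition twin_class x : {set V} := [set y | twin e x y].

Lemma twin_class_in x : twin_class x \in twin_classes e.
Proof. by apply/imsetP; exists x. Qed.

Definition class_of x : twin_vertex e := Sub (twin_class x) (twin_class_in x).

Lemma twin_class_eq x y : twin e x y -> twin_class x = twin_class y.
Proof.
move=> h; apply/setP => z; rewrite !inE; apply/idP/idP => h2.
  exact: twin_trans (twin_sym h) h2.
exact: twin_trans h h2.
Qed.

Lemma rep_twin x : twin e x (rep (twin_class x)).
Proof. by have /mem_rep : x \in twin_class x; rewrite inE ?twin_refl. Qed.

Lemma classE (A : twin_vertex e) : val A = twin_class (rep (val A)).
Proof. by case: A => A /= /imsetP [x _ ->]; exact: twin_class_eq (rep_twin x). Qed.

Lemma twin_edge x x' y y' : twin e x x' -> twin e y y' -> e x y = e x' y'.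
Proof. by move=> /twinP h1 /twinP h2; rewrite h1 e_sym h2 e_sym. Qed.

Lemma quotient_edge A B : twin_quotient e A B = e (rep (val A)) (rep (val B)).
Proof.
have repA (C : twin_vertex e) : rep (val C) \in val C by rewrite {2}classE inE twin_refl.
apply/idP/idP => [/existsP [x /andP [xA /existsP [y /andP [yB exy]]]] | h].
  have hx : twin e (rep (val A)) x by move: xA; rewrite {1}classE inE.
  have hy : twin e (rep (val B)) y by move: yB; rewrite {1}classE inE.
  by rewrite (twin_edge hx hy).
apply/existsP; exists (rep (val A)); rewrite repA.
by apply/existsP; exists (rep (val B)); rewrite repA.
Qed.

Section InducedAutomorphism.
Variable p : {perm V}.
Hypothesis p_aut : is_aut e p.

Definition induced_map (A : twin_vertex e) : twin_vertex e :=
  class_of (p (rep (val A))).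

Lemma induced_map_inj : injective induced_map.
Proof.
move=> A B /(congr1 val) /= hAB; apply/val_inj; rewrite [val A]classE [val B]classE.
have : p (rep (val B)) \in twin_class (p (rep (val A))) by rewrite hAB inE twin_refl.
by rewrite inE aut_twin // => /twin_class_eq.
Qed.

Definition induced_perm : {perm twin_vertex e} := perm induced_map_inj.

Lemma induced_perm_aut : is_aut (twin_quotient e) induced_perm.
Proof.
apply/forallP => A; apply/forallP => B; apply/eqP; rewrite !permE !quotient_edge /=.
by rewrite -(twin_edge (rep_twin _) (rep_twin _)) (autP p_aut).
Qed.

Lemma fixes_reps_twin (D : {set twin_vertex e}) : determining (twin_quotient e) D ->
  {in D, forall C, p (rep (val C)) = rep (val C)} -> forall x, twin e (p x) x.
Proof.
move=> /forallP /(_ induced_perm); rewrite induced_perm_aut /= => /implyP HD hD x.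
have /eqP/permP/(_ (class_of x)) : induced_perm == 1%g.
  apply: HD; apply/forallP => C; apply/implyP => CD; rewrite permE.
  by apply/eqP/val_inj => /=; rewrite hD // -classE.
rewrite permE perm1 => /(congr1 val) /= h.
have : x \in twin_class (p (rep (twin_class x))) by rewrite h inE twin_refl.
rewrite inE; apply: twin_trans.
by rewrite aut_twin // rep_twin.
Qed.

End InducedAutomorphism.
End TwinQuotient.

Lemma sum_card_slices (A B : finType) (P : A -> B -> bool) :
  \sum_(b : B) #|[set a | P a b]| = #|[set p : A * B | P p.1 p.2]|.
Proof.
transitivity (\sum_(a : A) \sum_(b : B) (P a b : nat)).
  rewrite exchange_big; apply: eq_bigr => b _.
  by rewrite -sum1_card big_mkcond; apply: eq_bigr => a _; rewrite inE.
rewrite pair_bigA -sum1_card [RHS]big_mkcond.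
by apply: eq_bigr => -[a b] _; rewrite inE.
Qed.

Section Mycielskian.
Variables (V : finType) (e : rel V) (t : nat).
Hypothesis e_sym : symmetric e.

Local Notation W := (option (V * 'I_t.+1)).
Local Notation M := (mycielskian e t).

Lemma mycielskian_sym : symmetric M.
Proof.
move=> [[i s]|] [[j r]|] //=; rewrite e_sym; congr andb.
by rewrite andbC; case: (_ == _.+1); case: (_ == _.+1); rewrite ?orbT ?orbF.
Qed.

Lemma twin_lift x y s : twin e x y -> twin M (Some (x, s)) (Some (y, s)).
Proof. by move=> /twinP H; apply/twinP => [[[j r]|]] //=; rewrite H. Qed.

Lemma isolated_copy_nbr i (s : 'I_t.+1) z :
  i \in isolated e -> s < t -> M (Some (i, s)) z = false.
Proof.
move=> hi hs; case: z => [[j r]|] /=; first by rewrite (isolatedP hi).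
by rewrite (ltn_eqF hs).
Qed.

Lemma isolated_copies_twin i j (s r : 'I_t.+1) :
  i \in isolated e -> j \in isolated e -> s < t -> r < t ->
  twin M (Some (i, s)) (Some (j, r)).
Proof. by move=> *; apply/twinP => z; rewrite !isolated_copy_nbr. Qed.

Lemma nbr_down j u (s : 'I_t.+1) : e j u -> M (Some (j, s)) (Some (u, inord s.-1)).
Proof.
move=> h /=; rewrite h /= inordK; last exact: leq_ltn_trans (leq_pred _) (ltn_ord s).
by case: (nat_of_ord s) => [|n] //=; rewrite eqxx !orbT.
Qed.

Lemma nbr_up j u (s : 'I_t.+1) : e j u -> s < t -> M (Some (j, s)) (Some (u, inord s.+1)).
Proof. by move=> h hs /=; rewrite h /= inordK // eqxx orbT. Qed.

Lemma mycielskian_level0 x y : M (Some (x, ord0)) (Some (y, ord0)) = e x y.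
Proof. by rewrite /= andbT. Qed.

Local Notation low i := (widen_ord (leqnSn t) i).

Section LowerBound.
Variables (T : {set V}) (i0 : V) (S : {set W}).
Hypotheses (Tmin : min_twin_cover e T) (i0i : i0 \in isolated e).
Hypothesis HS : determining M S.

Definition level (s : 'I_t.+1) : {set V} := [set x | Some (x, s) \in S].

Lemma level_cover s : twin_cover e (level s).
Proof.
apply/twin_coverP => x y nxy tw.
have /twin_coverP cov := determining_twin_cover mycielskian_sym HS.
rewrite !inE; apply: cov (twin_lift s tw).
by apply: contra nxy => /eqP [->].
Qed.

(* Adding the isolated vertices to a level and dropping i0 gives a twin cover,
   which is at least as large as the minimum one. *)
Lemma level_count s : #|T|.+1 <= #|level s| + #|isolated e :\: level s|.
Proof.
have cov := Tmin.2 _ (cover_add_isolated i0i (level_cover s)).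
have drop_i0 : #|level s :|: isolated e| = #|(level s :|: isolated e) :\ i0|.+1.
  by rewrite (cardsD1 i0) in_setU i0i orbT.
have split_union : #|level s :|: isolated e| = #|level s| + #|isolated e :\: level s|.
  rewrite cardsU cardsD [isolated e :&: _]setIC.
  by have := subset_leq_card (subsetIr (level s) (isolated e)); lia.
lia.
Qed.

Lemma card_levels : \sum_(s : 'I_t.+1) #|level s| <= #|S|.
Proof.
rewrite (sum_card_slices (fun x s => Some (x, s) \in S)).
rewrite -(card_imset _ (@Some_inj _)); apply: subset_leq_card.
by apply/subsetP => z /imsetP [[x s]]; rewrite inE => pS ->.
Qed.

Lemma missing_isolated_copies : \sum_(i < t) #|isolated e :\: level (low i)| <= 1.
Proof.
pose P x (i : 'I_t) := x \in isolated e :\: level (low i).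
rewrite (eq_bigr (fun i => #|[set x | P x i]|)); last first.
  by move=> i _; apply: eq_card => x; rewrite [RHS]inE.
rewrite sum_card_slices; apply/card_le1_eqP => -[x i] [y j].
rewrite !in_set /P !in_setD /= => /andP [xS xi] /andP [yS yj].
rewrite inE in xS; rewrite inE in yS.
apply/eqP/negPn/negP => neq.
have /twin_coverP cov := determining_twin_cover mycielskian_sym HS.
have neq' : Some (y, low j) != Some (x, low i).
  by apply: contra neq => /eqP [-> /val_inj ->].
have := cov _ _ neq' (@isolated_copies_twin y x (low j) (low i) yj xi (ltn_ord j) (ltn_ord i)).
by rewrite (negbTE xS) (negbTE yS).
Qed.

(* Sum level_count over the levels below the top, and add |level t| >= |T|. *)
Lemma lower_bound : t.+1 * #|T| + t - 1 <= #|S|.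
Proof.
apply: leq_trans card_levels; rewrite big_ord_recr /=.
set below_top := \sum_(i < t) _.
have top : #|T| <= #|level ord_max| := Tmin.2 _ (level_cover _).
have below : \sum_(i < t) #|T|.+1 <= below_top + 1.
  have := leq_sum (index_enum _) (fun (i : 'I_t) (_ : true) => level_count (low i)).
  by rewrite big_split /= => /leq_trans; apply; rewrite leq_add2l missing_isolated_copies.
rewrite sum_nat_const card_ord mulnS in below.
rewrite mulSn; lia.
Qed.

End LowerBound.

Section UpperBound.
Variables (T : {set V}) (i0 x1 x2 : V) (D : {set twin_vertex e}).
Hypotheses (Tcov : twin_cover e T) (i0i : i0 \in isolated e) (i0T : i0 \notin T).
Hypotheses (x12 : x1 != x2) (HD : determining (twin_quotient e) D).

Let pred_le_succ : t.-1 <= t.+1 := leq_trans (leq_pred t) (leqnSn t).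

Definition cover_copies : {set W} := [set Some p | p in setX T [set: 'I_t.+1]].
Definition isolated_copies : {set W} :=
  [set Some (i0, widen_ord pred_le_succ s) | s : 'I_t.-1].
Definition quotient_copies : {set W} := [set Some (rep i0 (val C), ord0) | C in D].
Definition upper_set : {set W} := cover_copies :|: isolated_copies :|: quotient_copies.

Lemma card_upper_set : #|upper_set| <= t.+1 * #|T| + t.-1 + #|D|.
Proof.
rewrite /upper_set !cardsU; apply: leq_trans (leq_subr _ _) _.
apply: leq_add; last exact: leq_imset_card.
apply: leq_trans (leq_subr _ _) _; apply: leq_add.
  by rewrite card_imset ?cardsX ?cardsT ?card_ord 1?mulnC //; exact: Some_inj.
by rewrite card_imset ?card_ord // => a b [] /val_inj.
Qed.

Definition fixes_upper_set (p : {perm W}) : Prop :=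
  is_aut M p /\ {in upper_set, forall z, p z = z}.

Lemma fixes_inv p : fixes_upper_set p -> fixes_upper_set p^-1.
Proof.
move=> [ha hf]; split; first exact: aut_inv.
by move=> z zS; rewrite -{1}(hf z zS) permK.
Qed.

Lemma fix_cover_copy p x s : fixes_upper_set p -> x \in T -> p (Some (x, s)) = Some (x, s).
Proof.
move=> [_ hf] xT; apply: hf; rewrite !in_setU; apply/orP; left; apply/orP; left.
by apply/imsetP; exists (x, s); rewrite // in_setX xT in_setT.
Qed.

(* A fixing automorphism cannot move a copy of x to the copy of a distinct twin y
   on the same level, since one of x, y lies in the twin cover T. *)
Lemma twin_image_fixed p x y s :
  fixes_upper_set p -> p (Some (x, s)) = Some (y, s) -> twin e x y -> y = x.
Proof.
move=> fixp pxy tw; case: (eqVneq x y) => [//|nxy].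
case/orP: (twin_coverP _ _ Tcov x y nxy tw) => [xT|yT].
  by move: pxy; rewrite fix_cover_copy // => -[].
by case: (perm_onto_fixed (fix_cover_copy s fixp yT) pxy).
Qed.

Lemma fix_isolated_copy p i (s : 'I_t.+1) : fixes_upper_set p -> i \in isolated e ->
  (i != i0) || (s < t.-1) -> p (Some (i, s)) = Some (i, s).
Proof.
move=> fixp ii; case: (eqVneq i i0) => [->|ni] /= hs; last first.
  apply: fix_cover_copy => //.
  by case/orP: (twin_coverP _ _ Tcov i i0 ni (isolated_twin ii i0i)); rewrite ?(negbTE i0T).
apply: fixp.2; rewrite !in_setU; apply/orP; left; apply/orP; right.
by apply/imsetP; exists (Ordinal hs) => //; congr (Some (_, _)); exact: val_inj.
Qed.

Lemma no_neighbours_isolated_copy z : (forall y, M z y = false) ->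
  exists j (r : 'I_t.+1), [/\ z = Some (j, r), j \in isolated e & r < t].
Proof.
case: z => [[j r]|] H; last by have := H (Some (i0, ord_max)); rewrite /= eqxx.
have hr : r < t.
  rewrite ltn_neqAle -ltnS ltn_ord andbT; apply/negP => /eqP h.
  by have := H None; rewrite /= h eqxx.
exists j, r; split => //; rewrite inE; apply/forallP => u; apply/negP => eju.
by have := H (Some (u, inord r.-1)); rewrite nbr_down.
Qed.

Lemma fix_isolated_below_top p i (s : 'I_t.+1) : fixes_upper_set p ->
  i \in isolated e -> s < t -> p (Some (i, s)) = Some (i, s).
Proof.
move=> fixp ii hs.
have [h|] := boolP ((i != i0) || (s < t.-1)); first exact: fix_isolated_copy.
rewrite negb_or negbK -leqNgt => /andP [/eqP ei hs2].
have [j [r [hz ji hr]]] : exists j (r : 'I_t.+1),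
    [/\ p (Some (i, s)) = Some (j, r), j \in isolated e & r < t].
  apply: no_neighbours_isolated_copy => y.
  by rewrite -{1}(permKV p y) (autP fixp.1) isolated_copy_nbr.
have [h|] := boolP ((j != i0) || (r < t.-1)).
  by rewrite hz (perm_onto_fixed (fix_isolated_copy fixp ji h) hz).
rewrite negb_or negbK -leqNgt => /andP [/eqP ej hr2].
have esr : s = r by apply/val_inj; move: hs hr hs2 hr2 => /=; lia.
by rewrite hz ej ei esr.
Qed.

(* Only w can be the unique neighbour of a vertex: a vertex on a level s < t that
   has a neighbour has two, one on each adjacent level (or two on level 0), and w
   has the two neighbours x1, x2 on the top level. *)
Lemma pendant_apex z a : (forall b, M z b = (b == a)) -> a = None.
Proof.
case: z => [[j s]|] H; last first.
  move: (H (Some (x1, ord_max))) (H (Some (x2, ord_max))).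
  rewrite /= eqxx => /esym /eqP <- /esym /eqP [] e12.
  by move: x12; rewrite e12 eqxx.
have [hs|hs] := eqVneq (s : nat) t.
  by have := H None; rewrite /= hs eqxx => /esym /eqP <-.
have hst : s < t by rewrite ltn_neqAle hs -ltnS ltn_ord.
have [ji|/not_isolatedP [u eju]] := boolP (j \in isolated e).
  by have := H a; rewrite eqxx isolated_copy_nbr.
move: (H (Some (u, inord s.-1))) (H (Some (u, inord s.+1))).
rewrite nbr_down // nbr_up // => /esym /eqP <- /esym /eqP [] /(congr1 val) /=.
rewrite !inordK //; last exact: leq_ltn_trans (leq_pred _) (ltn_ord s).
by case: (nat_of_ord s) => [|n] //=; lia.
Qed.

(* w is fixed: it is the unique neighbour of the top copy of i0. *)
Lemma fix_apex p : fixes_upper_set p -> p None = None.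
Proof.
move=> [ha _].
have pendant b : M (Some (i0, ord_max)) b = (b == None).
  by case: b => [[j r]|] /=; [rewrite (isolatedP i0i) | rewrite eqxx].
apply: (@pendant_apex (p (Some (i0, ord_max)))) => b.
rewrite -{1}(permKV p b) (autP ha) pendant.
by apply/eqP/eqP => [<-|->]; rewrite ?permKV ?permK.
Qed.

(* The top level is preserved, being the neighbourhood of the fixed vertex w. *)
Lemma top_level_preserved p x (s : 'I_t.+1) : fixes_upper_set p -> (s : nat) = t ->
  exists y, p (Some (x, s)) = Some (y, s).
Proof.
move=> fixp st; have := autP fixp.1 (Some (x, s)) None.
rewrite fix_apex // /= st eqxx; case: (p (Some (x, s))) => [[y r]|] //= /eqP hr.
by exists y; congr (Some (_, _)); apply/val_inj => /=; lia.
Qed.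

(* If all fixing automorphisms preserve the levels above s < t, then they also
   preserve level s: a non-isolated x has a neighbour on level s+1, so the image
   of its copy lies on level s or s+2, and the latter contradicts level
   preservation by the inverse. *)
Lemma level_down p x (s : 'I_t.+1) : fixes_upper_set p -> s < t ->
  (forall q, fixes_upper_set q -> forall z (r : 'I_t.+1), s < r ->
     exists y, q (Some (z, r)) = Some (y, r)) ->
  exists y, p (Some (x, s)) = Some (y, s).
Proof.
move=> fixp hs above.
have [xi|/not_isolatedP [u exu]] := boolP (x \in isolated e).
  by exists x; exact: fix_isolated_below_top.
have [u' hu'] : exists u', p (Some (u, inord s.+1)) = Some (u', inord s.+1).
  by apply: above => //; rewrite inordK.
have := autP fixp.1 (Some (x, s)) (Some (u, inord s.+1)); rewrite nbr_up // hu'.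
case hz: (p (Some (x, s))) => [[y r]|] /=; last first.
  by have := perm_onto_fixed (fix_apex fixp) hz.
rewrite inordK // => /andP [_] /or3P [/andP [_ /eqP r0] | /eqP r1 | /eqP r2] //.
  by exists y; congr (Some (_, _)); apply/val_inj => /=; lia.
have [y' hy'] : exists y', (p^-1)%g (Some (y, r)) = Some (y', r).
  by apply: above; [exact: fixes_inv | lia].
by move: hy'; rewrite -hz permK => -[_] /(congr1 val) /=; lia.
Qed.

Lemma level_preserved p x (s : 'I_t.+1) : fixes_upper_set p ->
  exists y, p (Some (x, s)) = Some (y, s).
Proof.
move: {2}(t - s) (leqnn (t - s)) => d; elim: d p x s => [|d IH] p x s hd fixp.
  by apply: top_level_preserved fixp _; move: (ltn_ord s) hd; lia.
have [hs|ts] := ltnP s t; last by apply: top_level_preserved fixp _; move: (ltn_ord s) ts; lia.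
by apply: level_down => // q fixq z r hsr; apply: IH => //; lia.
Qed.

Section LevelZero.
Variable p : {perm W}.
Hypothesis fixp : fixes_upper_set p.

Definition level0_map x : V := if p (Some (x, ord0)) is Some (y, _) then y else x.

Lemma level0_mapE x : p (Some (x, ord0)) = Some (level0_map x, ord0).
Proof. by rewrite /level0_map; have [y ->] := level_preserved x ord0 fixp. Qed.

Lemma level0_map_inj : injective level0_map.
Proof. by move=> a b h; have := level0_mapE a; rewrite h -level0_mapE => /perm_inj [->]. Qed.

Definition level0_perm : {perm V} := perm level0_map_inj.

Lemma level0_perm_aut : is_aut e level0_perm.
Proof.
apply/forallP => a; apply/forallP => b; apply/eqP.
by rewrite !permE -!mycielskian_level0 -!level0_mapE (autP fixp.1).
Qed.

(* level0_perm fixes the representatives of D, so by the determining property of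
   D it maps each vertex to a twin; then twin_image_fixed applies. *)
Lemma level0_fixed x : p (Some (x, ord0)) = Some (x, ord0).
Proof.
have fixD : {in D, forall C, level0_perm (rep i0 (val C)) = rep i0 (val C)}.
  move=> C CD; have : p (Some (rep i0 (val C), ord0)) = Some (rep i0 (val C), ord0).
    by apply: fixp.2; rewrite !in_setU; apply/orP; right; apply/imsetP; exists C.
  by rewrite permE level0_mapE => -[].
have tw := fixes_reps_twin e_sym level0_perm_aut HD fixD x.
rewrite level0_mapE; congr (Some (_, _)); apply: (twin_image_fixed fixp (level0_mapE x)).
by apply: twin_sym; rewrite permE in tw.
Qed.

End LevelZero.

(* Going up one level, the copies of x and of its image on level s+1 have the
   same neighbours on the fixed level s, so they are twins. *)
Lemma all_fixed p (s : 'I_t.+1) x : fixes_upper_set p -> p (Some (x, s)) = Some (x, s).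
Proof.
move=> fixp; case: s x => n; elim: n => [|n IH] hn x.
  by rewrite (_ : Ordinal hn = ord0) ?level0_fixed //; apply/val_inj.
have [y hy] := level_preserved x (Ordinal hn) fixp.
rewrite hy; congr (Some (_, _)); apply: (twin_image_fixed fixp hy).
apply/twinP => u.
have := autP fixp.1 (Some (x, Ordinal hn)) (Some (u, Ordinal (ltnW hn))).
by rewrite hy IH /= !eqxx !orbT !andbT.
Qed.

Lemma upper_set_determining : determining M upper_set.
Proof.
apply/forallP=> p; apply/implyP=> ha; apply/implyP=> /forallP hf.
have fixp : fixes_upper_set p by split => // z zS; apply/eqP/(implyP (hf z) zS).
by apply/eqP/permP => [[[x s]|]]; rewrite perm1; [exact: all_fixed | exact: fix_apex].
Qed.

Lemma upper_bound : det M <= t.+1 * #|T| + t.-1 + #|D|.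
Proof. exact: leq_trans (det_le upper_set_determining) card_upper_set. Qed.

End UpperBound.
End Mycielskian.

(* The two bounds (t >= 1 is used only to rewrite t.-1 as t - 1). *)
Lemma det_mycielskian_bounds (V : finType) (e : rel V) (T : {set V}) (t : nat) :
  thm_hyps e T -> 1 <= t ->
  (t.+1 * #|T| + t - 1 <= det (mycielskian e t)) /\
  (det (mycielskian e t) <= det (twin_quotient e) + (t.+1 * #|T| + t - 1)).
Proof.
move=> [[e_sym _] [v hv] /existsP [x1 /existsP [x2 /andP [x12 _]]] Tmin] t_pos.
have vi : v \in isolated e by rewrite inE; apply/forallP.
split; first by apply: det_ge => S HS; apply: (lower_bound e_sym Tmin vi HS).
have [i0 i0i i0T] := min_cover_omits_isolated Tmin vi.
have [D HD <-] := det_attained (twin_quotient e).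
apply: leq_trans (upper_bound t e_sym Tmin.1 i0i i0T x12 HD) _; lia.
Qed.

(* Sharpness: the edgeless graph on two vertices.  Its vertices are isolated
   twins, one of them is a minimum twin cover, and its twin quotient is a single
   vertex, so that both bounds coincide. *)
Definition edgeless2 : rel bool := fun _ _ => false.

Lemma edgeless2_hyps : thm_hyps edgeless2 [set true].
Proof.
have tw : twin edgeless2 true false by apply/twinP.
split=> //; first by exists true.
  by apply/existsP; exists true; apply/existsP; exists false.
split=> [|S /twin_coverP cov].
  by apply/twin_coverP => -[] [] //; rewrite !inE.
by rewrite cards1; apply/card_gt0P; case/orP: (cov true false isT tw); eexists; eassumption.
Qed.

Lemma edgeless2_quotient_det : det (twin_quotient edgeless2) = 0.
Proof.
have single (A : twin_vertex edgeless2) : val A = setT.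
  by case: A => A /= /imsetP [x _ ->]; apply/setP => y; rewrite !inE; apply/twinP.
apply/eqP; rewrite -leqn0 -(cards0 (twin_vertex edgeless2)); apply: det_le.
apply/forallP => p; apply/implyP => _; apply/implyP => _.
by apply/eqP/permP => A; rewrite perm1; apply/val_inj; rewrite !single.
Qed.

Lemma edgeless2_det t : 1 <= t ->
  det (mycielskian edgeless2 t) = det (twin_quotient edgeless2) + (t.+1 * #|[set true]| + t - 1).
Proof.
move=> t_pos; have [lower upper] := det_mycielskian_bounds edgeless2_hyps t_pos.
by apply/eqP; rewrite eqn_leq upper edgeless2_quotient_det add0n lower.
Qed.

Theorem mainTheorem8 :
  (forall (V : finType) (e : rel V) (T : {set V}) (t : nat),
     thm_hyps e T -> 1 <= t ->
     (t.+1 * #|T| + t - 1 <= det (mycielskian e t)) /\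
     (det (mycielskian e t) <= det (twin_quotient e) + (t.+1 * #|T| + t - 1)))
  /\
  (forall t : nat, 1 <= t ->
     exists (V : finType) (e : rel V) (T : {set V}),
       thm_hyps e T /\ det (mycielskian e t) = t.+1 * #|T| + t - 1)
  /\
  (forall t : nat, 1 <= t ->
     exists (V : finType) (e : rel V) (T : {set V}),
       thm_hyps e T /\
       det (mycielskian e t) = det (twin_quotient e) + (t.+1 * #|T| + t - 1)).
Proof.
split; first exact: det_mycielskian_bounds.
split=> t t_pos; exists (bool : finType), edgeless2, [set true].
  by rewrite edgeless2_det // edgeless2_quotient_det; split; first exact: edgeless2_hyps.
by split; [exact: edgeless2_hyps | exact: edgeless2_det].
Qed.
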